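(* Let $(X,\|\cdot\|)$ be a normed linear space over $\mathbb{R}$ or $\mathbb{C}$, let $x_1,\dots,x_n\in X$, $a\in X\setminus\{0\}$, and let $p_1,\dots,p_n\ge 0$ with $\sum_{j=1}^n p_j=1$. Then $$\Big\|\sum_{j=1}^n p_jx_j\Big\|\,\|a\|+\frac12\sum_{j=1}^n p_j\|x_j-a\|^2\ \ge\ \frac12\|a\|^2.$$ The constant $\tfrac12$ on the right-hand side is best possible: if $X\ne\{0\}$, there is no constant $D>\tfrac12$ such that $\big\|\sum_{j=1}^n p_jx_j\big\|\,\|a\|+\frac12\sum_{j=1}^n p_j\|x_j-a\|^2\ge D\|a\|^2$ holds for all $n\ge1$, all $x_j\in X$, all $p_j\ge0$ with $\sum_j p_j=1$ and all $a\in X\setminus\{0\}$. *)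

From HB Require Import structures.
From mathcomp Require Import all_boot all_order all_algebra.
From mathcomp Require Import all_classical all_reals all_analysis.
Set Implicit Arguments. Unset Strict Implicit. Unset Printing Implicit Defensive.
Import Order.TTheory GRing.Theory Num.Theory.
Import numFieldNormedType.Exports.
Local Open Scope ring_scope.

Definition thm_lhs (K : numFieldType) (X : normedModType K) (n : nat)
  (x : 'I_n -> X) (p : 'I_n -> K) (a : X) : K :=
  `|\sum_(j < n) p j *: x j| * `|a| + 2^-1 * \sum_(j < n) p j * `|x j - a| ^+ 2.

From HB Require Import structures.
From mathcomp Require Import all_boot all_order all_algebra.
From mathcomp Require Import all_classical all_reals all_analysis.
From mathcomp Require Import ring.
Import Order.TTheory GRing.Theory Num.Theory.
Import numFieldNormedType.Exports.
Set Implicit Arguments. Unset Strict Implicit. Unset Printing Implicit Defensive.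
Local Open Scope ring_scope.

(* Put s = sum_j p_j x_j.  The triangle inequality and Jensen's inequality for
   t |-> t^2 give (||a|| - ||s||)^2 <= ||s - a||^2 <= sum_j p_j ||x_j - a||^2,
   and ||s|| ||a|| + 1/2 (||a|| - ||s||)^2 = 1/2 ||a||^2 + 1/2 ||s||^2.
   Equality holds for n = 1, x_1 = 0, which shows that 1/2 is optimal. *)

Lemma sqr_avg_le_avg_sqr (K : numFieldType) (n : nat) (p y : 'I_n -> K) :
  (forall j, 0 <= p j) -> (forall j, y j \is Num.real) -> \sum_(j < n) p j = 1 ->
  (\sum_(j < n) p j * y j) ^+ 2 <= \sum_(j < n) p j * y j ^+ 2.
Proof.
move=> p_ge0 y_real p_sum1; set m := \sum_(j < n) p j * y j.
have m_real : m \is Num.real.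
  by apply: rpred_sum => j _; apply: realM; [exact: ger0_real | exact: y_real].
have variance_ge0 : 0 <= \sum_(j < n) p j * (y j - m) ^+ 2.
  apply: sumr_ge0 => j _; rewrite mulr_ge0 //.
  by rewrite real_exprn_even_ge0 ?rpredB ?y_real.
have variance_eq : \sum_(j < n) p j * (y j - m) ^+ 2 =
                   \sum_(j < n) p j * y j ^+ 2 - m ^+ 2.
  under eq_bigr => j _ do
    have -> : p j * (y j - m) ^+ 2 =
              p j * y j ^+ 2 - (m * 2) * (p j * y j) + m ^+ 2 * p j by ring.
  by rewrite big_split sumrB /= -!mulr_sumr p_sum1 -/m; ring.
by rewrite -subr_ge0 -variance_eq.
Qed.

Lemma convex_comb_subr (K : pzRingType) (V : lmodType K) (n : nat)
    (p : 'I_n -> K) (x : 'I_n -> V) (a : V) :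
  \sum_(j < n) p j = 1 ->
  \sum_(j < n) p j *: x j - a = \sum_(j < n) p j *: (x j - a).
Proof.
move=> p_sum1; under [RHS]eq_bigr => j _ do rewrite scalerBr.
by rewrite sumrB -scaler_suml p_sum1 scale1r.
Qed.

Lemma sqr_norm_convex_comb_subr_le (K : numFieldType) (X : normedModType K)
    (n : nat) (p : 'I_n -> K) (x : 'I_n -> X) (a : X) :
  (forall j, 0 <= p j) -> \sum_(j < n) p j = 1 ->
  `|\sum_(j < n) p j *: x j - a| ^+ 2 <= \sum_(j < n) p j * `|x j - a| ^+ 2.
Proof.
move=> p_ge0 p_sum1.
have triangle : `|\sum_(j < n) p j *: x j - a| <= \sum_(j < n) p j * `|x j - a|.
  rewrite convex_comb_subr //; apply: le_trans (ler_norm_sum _ _ _) _.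
  by apply: ler_sum => j _; rewrite normrZ ger0_norm.
apply: le_trans _ (sqr_avg_le_avg_sqr p_ge0 (fun j => normr_real (x j - a)) p_sum1).
by rewrite lerXn2r ?nnegrE ?(le_trans _ triangle).
Qed.

Lemma half_sqr_le_mul_add_half_sqr_subr (K : numFieldType) (t A : K) :
  t \is Num.real -> 2^-1 * A ^+ 2 <= t * A + 2^-1 * (A - t) ^+ 2.
Proof.
move=> t_real.
have -> : t * A + 2^-1 * (A - t) ^+ 2 = 2^-1 * A ^+ 2 + 2^-1 * t ^+ 2 by field.
by rewrite lerDl mulr_ge0 ?invr_ge0 ?real_exprn_even_ge0.
Qed.

Lemma half_sqr_norm_le_thm_lhs (K : numFieldType) (X : normedModType K)
    (n : nat) (x : 'I_n -> X) (p : 'I_n -> K) (a : X) :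
  (forall j, 0 <= p j) -> \sum_(j < n) p j = 1 ->
  2^-1 * `|a| ^+ 2 <= thm_lhs x p a.
Proof.
move=> p_ge0 p_sum1; rewrite /thm_lhs; set s := \sum_(j < n) p j *: x j.
apply: le_trans (half_sqr_le_mul_add_half_sqr_subr `|a| (normr_real s)) _.
rewrite lerD2l ler_wpM2l ?invr_ge0 //.
apply: le_trans _ (sqr_norm_convex_comb_subr_le x a p_ge0 p_sum1).
rewrite -real_normK ?rpredB ?normr_real // lerXn2r ?nnegrE //.
by rewrite distrC ler_dist_dist.
Qed.

Lemma thm_lhs_point_mass_at0 (K : numFieldType) (X : normedModType K) (a : X) :
  thm_lhs (fun _ : 'I_1 => 0) (fun _ => 1) a = 2^-1 * `|a| ^+ 2.
Proof.
by rewrite /thm_lhs !big_ord1 scaler0 normr0 mul0r add0r mul1r sub0r normrN.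
Qed.

Theorem theorem2p1 (K : numFieldType) (X : normedModType K) :
  (forall (n : nat) (x : 'I_n -> X) (p : 'I_n -> K) (a : X),
      a != 0 -> (forall j, 0 <= p j) -> \sum_(j < n) p j = 1 ->
      2^-1 * `|a| ^+ 2 <= thm_lhs x p a)
  /\
  ((exists y : X, y != 0) ->
   forall D : K, 2^-1 < D ->
   ~ (forall (n : nat) (x : 'I_n -> X) (p : 'I_n -> K) (a : X),
        (0 < n)%N -> a != 0 -> (forall j, 0 <= p j) -> \sum_(j < n) p j = 1 ->
        D * `|a| ^+ 2 <= thm_lhs x p a)).
Proof.
split=> [n x p a _|[y y_neq0] D half_lt_D bound_D].
  exact: half_sqr_norm_le_thm_lhs.
have := bound_D 1%N (fun _ => 0) (fun _ => 1) y isT y_neq0 (fun _ => ler01).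
rewrite big_ord1 thm_lhs_point_mass_at0 => /(_ erefl).
by rewrite ler_pM2r ?exprn_gt0 ?normr_gt0 // (lt_geF half_lt_D).
Qed.
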